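(* Let $d\geq 1$, let $p_1<\dots<p_d$ be the first $d$ prime numbers, let $N\geq 1$ be an integer, let $C>0$, and let $p\geq 1$ be real. For $1\le k\le d$ let $\mathbf{b}_k\in\mathbb{R}^{d+1}$ be the vector with entry $(\ln p_k)^{1/p}$ in coordinate $k$, entry $C\ln p_k$ in coordinate $d+1$, and zeros elsewhere, and let $\mathbf{t}=(0,\dots,0,C\ln N)^T\in\mathbb{R}^{d+1}$. Define $D_0=1$ and $$D_j=1+C^2\sum_{i=1}^j(\ln p_i)^{2-2/p},\qquad 1\le j\le d.$$ Let $\mathbf{b}_1^\star,\dots,\mathbf{b}_d^\star,\mathbf{t}^\star$ be the Gram–Schmidt orthogonalization of the ordered family $(\mathbf{b}_1,\dots,\mathbf{b}_d,\mathbf{t})$. Then for $1\le k\le d$ and $1\le i\le d+1$, $$(\mathbf{b}_k^\star)_i=\begin{cases}-\dfrac{C^2\ln p_k(\ln p_i)^{1-1/p}}{D_{k-1}} & i<k,\\ (\ln p_k)^{1/p} & i=k,\\ 0 & k<i<d+1,\\ \dfrac{C\ln p_k}{D_{k-1}} & i=d+1,\end{cases}$$ and $$(\mathbf{t}^\star)_i=\begin{cases}-\dfrac{C^2(\ln N)(\ln p_i)^{1-1/p}}{D_d} & i<d+1,\\ \dfrac{C\ln N}{D_d} & i=d+1.\end{cases}$$ Moreover $\|\mathbf{b}_k^\star\|_2^2=(\ln p_k)^{2/p}\dfrac{D_k}{D_{k-1}}$ for $1\le k\le d$, $\|\mathbf{t}^\star\|_2^2=\dfrac{(C\ln N)^2}{D_d}$,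 and the orthogonal projection $\mathbf{t}-\mathbf{t}^\star$ of $\mathbf{t}$ onto the span of $\mathbf{b}_1,\dots,\mathbf{b}_d$ is given by $$(\mathbf{t}-\mathbf{t}^\star)_i=\begin{cases}\dfrac{C^2(\ln N)(\ln p_i)^{1-1/p}}{D_d} & i<d+1,\\ \dfrac{C(\ln N)(D_d-1)}{D_d} & i=d+1.\end{cases}$$
   Context: $\ln$ is the natural logarithm, $\|\cdot\|_2$ the Euclidean norm, and $(\mathbf{v})_i$ denotes the $i$-th coordinate of $\mathbf{v}$. Gram–Schmidt orthogonalization of $(\mathbf{v}_1,\dots,\mathbf{v}_m)$: $\mathbf{v}_k^\star=\mathbf{v}_k-\sum_{j<k}\mu_{k,j}\mathbf{v}_j^\star$ with $\mu_{k,j}=\frac{\mathbf{v}_k\cdot\mathbf{v}_j^\star}{\mathbf{v}_j^\star\cdot\mathbf{v}_j^\star}$. *)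

From HB Require Import structures.
From mathcomp Require Import all_boot all_order all_algebra.
From mathcomp Require Import reals exp.
Set Implicit Arguments. Unset Strict Implicit. Unset Printing Implicit Defensive.
Import Order.TTheory GRing.Theory Num.Theory.
Local Open Scope ring_scope.

Definition next_prime (n : nat) : nat :=
  ex_minn (let: exist2 p Hnp Hp := prime_above n in
           ex_intro (fun q => prime q && (n < q)%N) p (introT andP (conj Hp Hnp))).

(* nth_prime k = the (k+1)-th prime (0-based): 2, 3, 5, 7, ... *)
Fixpoint nth_prime (k : nat) : nat :=
  match k with 0 => 2 | k'.+1 => next_prime (nth_prime k') end.

Section GS.
Variable R : realType.
Variable n : nat.

Definition dotv (u v : 'rV[R]_n) : R := \sum_(i < n) u 0 i * v 0 i.

Definition gs_step (acc : seq 'rV[R]_n) (v : 'rV[R]_n) : seq 'rV[R]_n :=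
  rcons acc (v - \sum_(w <- acc) (dotv v w / dotv w w) *: w).

Definition gram_schmidt (s : seq 'rV[R]_n) : seq 'rV[R]_n := foldl gs_step [::] s.
End GS.

Section Lattice.
Variable R : realType.
Variables (d N : nat) (C p : R).

Definition lnp (k : nat) : R := ln (nth_prime k)%:R.

Definition bvec (k : 'I_d) : 'rV[R]_(d.+1) :=
  \row_(i < d.+1) (if (i : nat) == (k : nat) then powR (lnp k) p^-1
                   else if (i : nat) == d then C * lnp k else 0).

Definition tvec : 'rV[R]_(d.+1) :=
  \row_(i < d.+1) (if (i : nat) == d then C * ln N%:R else 0).

(* D j = 1 + C^2 sum_{i=1}^j (ln p_i)^{2-2/p}; here the sum is over 0-based i < j *)
Definition Dj (j : nat) : R := 1 + C ^+ 2 * \sum_(i < j) powR (lnp i) (2 - 2 / p).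

Definition family : seq 'rV[R]_(d.+1) := [seq bvec k | k <- enum 'I_d] ++ [:: tvec].
Definition gs_family := gram_schmidt family.
Definition bstar (k : 'I_d) : 'rV[R]_(d.+1) := nth 0 gs_family k.
Definition tstar : 'rV[R]_(d.+1) := nth 0 gs_family d.
End Lattice.

Arguments bvec {R} d C p k.
Arguments tvec {R} d N C.
Arguments Dj {R} C p j.
Arguments family {R} d N C p.
Arguments gs_family {R} d N C p.
Arguments bstar {R} d N C p k.
Arguments tstar {R} d N C p.

(* Write b_j = u_j e_j + C L_j e_d with u_j w_j = L_j, where u_j = (ln p_j)^{1/p},
   w_j = (ln p_j)^{1-1/p} and L_j = ln p_j.  For a vector v vanishing on the first
   k coordinates with last coordinate C A, the Gram-Schmidt coefficient of v on
   b_j^* (j < k) is C^2 A w_j / (u_j D_{j+1}), whatever the other coordinates of v.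
   The resulting contributions to a coordinate i < k and to the last coordinate
   telescope along 1/D_j - 1/D_{j+1}, which produces the factors D_k.  Applying
   this to v = b_k (by induction on k) and to v = t gives all the formulas. *)

From Pilot Require Import Defs.
From HB Require Import structures.
From mathcomp Require Import all_boot all_order all_algebra.
From mathcomp Require Import reals exp.
From mathcomp Require Import ring.
Import Order.TTheory GRing.Theory Num.Theory.
Local Open Scope ring_scope.

Lemma nth_prime_prime k : prime (nth_prime k).
Proof. by case: k => [|k] //=; rewrite /next_prime; case: ex_minnP => q /andP[]. Qed.

Lemma lnp_gt0 (R : realType) k : 0 < lnp R k.
Proof. by apply: ln_gt0; rewrite ltr1n prime_gt1 ?nth_prime_prime. Qed.

Lemma dotv_row (R : realType) n (f g : nat -> R) :
  dotv (\row_(i < n.+1) f i) (\row_(i < n.+1) g i) =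
  \sum_(0 <= i < n) f i * g i + f n * g n.
Proof.
rewrite /dotv big_ord_recr /= !mxE big_mkord; congr (_ + _).
by apply: eq_bigr => i _; rewrite !mxE.
Qed.

(* Vectors of [R^(d+1)] are given by coordinate functions on [0..d]; the last
   coordinate is [d]. *)
Section GramSchmidtArrow.
Variables (R : realType) (d : nat) (C : R) (u w L : nat -> R).
Hypothesis u_neq0 : forall j, u j != 0.
Hypothesis u_mul_w : forall j, u j * w j = L j.

Definition Dsum (k : nat) : R := 1 + C ^+ 2 * \sum_(0 <= i < k) w i ^+ 2.

Lemma Dsum0 : Dsum 0 = 1.
Proof. by rewrite /Dsum big_geq // mulr0 addr0. Qed.

Lemma DsumS k : Dsum k.+1 = Dsum k + C ^+ 2 * w k ^+ 2.
Proof. by rewrite /Dsum big_nat_recr //= mulrDr addrA. Qed.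

Lemma Dsum_gt0 k : 0 < Dsum k.
Proof.
rewrite /Dsum ltr_pwDl // mulr_ge0 ?sqr_ge0 //.
by apply: sumr_ge0 => i _; exact: sqr_ge0.
Qed.

Definition bvec_at (j i : nat) : R :=
  if i == j then u j else if i == d then C * L j else 0.

Definition bstar_at (j i : nat) : R :=
  if (i < j)%N then - (C ^+ 2 * L j * w i) / Dsum j
  else if i == j then u j
  else if (i < d)%N then 0
  else C * L j / Dsum j.

Definition tstar_at (A : R) (i : nat) : R :=
  if (i < d)%N then - (C ^+ 2 * A * w i) / Dsum d else C * A / Dsum d.

Lemma bstar_at_gt j i : (j < i)%N ->
  bstar_at j i = if (i < d)%N then 0 else C * L j / Dsum j.
Proof. by move=> lt_ji; rewrite /bstar_at ltnNge ltnW //= gtn_eqF. Qed.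

Lemma dotv_bstar (f : nat -> R) k j :
  (k <= d)%N -> (j < k)%N -> (forall i, (i < k)%N -> f i = 0) ->
  dotv (\row_(i < d.+1) f i) (\row_(i < d.+1) bstar_at j i) =
  f d * (C * L j / Dsum j).
Proof.
move=> le_kd lt_jk f0; rewrite dotv_row bstar_at_gt ?ltnn ?(leq_trans lt_jk) //.
rewrite big_nat big1 ?add0r // => i /andP[_ lt_id].
have [lt_ik|le_ki] := ltnP i k; first by rewrite f0 ?mul0r.
by rewrite bstar_at_gt ?lt_id ?mulr0 // (leq_trans lt_jk).
Qed.

Lemma dotv_bstar_self j : (j < d)%N ->
  dotv (\row_(i < d.+1) bstar_at j i) (\row_(i < d.+1) bstar_at j i) =
  u j ^+ 2 * (Dsum j.+1 / Dsum j).
Proof.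
move=> lt_jd; rewrite dotv_row bstar_at_gt // ltnn.
rewrite (big_cat_nat (leq0n j) (ltnW lt_jd)) (big_cat_nat (leqnSn j) lt_jd) /=.
rewrite big_nat1 [X in _ + (_ + X)]big_nat [X in _ + (_ + X)]big1 ?addr0; last first.
  by move=> i /andP[lt_ji lt_id]; rewrite bstar_at_gt // lt_id mulr0.
have -> : \sum_(0 <= i < j) bstar_at j i * bstar_at j i =
          (C ^+ 2 * L j / Dsum j) ^+ 2 * \sum_(0 <= i < j) w i ^+ 2.
  by rewrite mulr_sumr; apply: eq_big_nat => i /andP[_ lt_ij]; rewrite /bstar_at lt_ij; ring.
rewrite /bstar_at ltnn eqxx DsumS -u_mul_w.
have := Dsum_gt0 j; rewrite /Dsum => D_gt0.
by field; rewrite gt_eqF.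
Qed.

(* The coefficient of [b_j^*] in the projection of any vector that vanishes on
   the first [k > j] coordinates and has last coordinate [C * A]. *)
Definition gs_coef (A : R) (j : nat) : R := C ^+ 2 * A * w j / (u j * Dsum j.+1).

Lemma proj_coef_bstar (f : nat -> R) A k j :
  (k <= d)%N -> (j < k)%N -> (forall i, (i < k)%N -> f i = 0) -> f d = C * A ->
  dotv (\row_(i < d.+1) f i) (\row_(i < d.+1) bstar_at j i) /
  dotv (\row_(i < d.+1) bstar_at j i) (\row_(i < d.+1) bstar_at j i) = gs_coef A j.
Proof.
move=> le_kd lt_jk f0 fd.
rewrite (dotv_bstar _ _ _ le_kd lt_jk f0) dotv_bstar_self ?(leq_trans lt_jk) //.
rewrite fd /gs_coef DsumS -u_mul_w.
have D_gt0 := Dsum_gt0 j; have := Dsum_gt0 j.+1; rewrite DsumS => D1_gt0.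
by field; rewrite exprMn u_neq0 !gt_eqF.
Qed.

Lemma gs_coef_last A j :
  gs_coef A j * (C * L j / Dsum j) = - (C * A / Dsum j.+1 - C * A / Dsum j).
Proof.
rewrite /gs_coef DsumS -u_mul_w.
have D_gt0 := Dsum_gt0 j; have := Dsum_gt0 j.+1; rewrite DsumS => D1_gt0.
by field; rewrite exprMn u_neq0 !gt_eqF.
Qed.

Lemma gs_coef_diag A j : gs_coef A j * u j = C ^+ 2 * A * w j / Dsum j.+1.
Proof. by rewrite /gs_coef; field; rewrite u_neq0 gt_eqF ?Dsum_gt0. Qed.

Lemma gs_residual (f : nat -> R) A k (i : 'I_d.+1) :
  (k <= d)%N -> (forall i, (i < k)%N -> f i = 0) -> f d = C * A ->
  (\row_(i < d.+1) f i -
   \sum_(b <- [seq \row_(i < d.+1) bstar_at j i | j <- iota 0 k])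
     (dotv (\row_(i < d.+1) f i) b / dotv b b) *: b) 0 i =
  if (i < k)%N then - (C ^+ 2 * A * w i) / Dsum k
  else if (i < d)%N then f i else C * A / Dsum k.
Proof.
move=> le_kd f0 fd; rewrite !mxE summxE big_map.
have -> : iota 0 k = index_iota 0 k by rewrite /index_iota subn0.
under eq_big_nat => j /andP[_ lt_jk] do
  rewrite mxE (proj_coef_bstar _ _ _ _ le_kd lt_jk f0 fd) mxE.
have [lt_ik|le_ki] := ltnP i k.
  have lt_id := leq_trans lt_ik le_kd.
  rewrite f0 // (big_cat_nat (leq0n i) (ltnW lt_ik)) (big_cat_nat (leqnSn i) lt_ik) /=.
  rewrite [X in _ - (X + _)]big_nat [X in _ - (X + _)]big1 ?add0r; last first.
    by move=> j /andP[_ lt_ji]; rewrite bstar_at_gt // lt_id mulr0.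
  rewrite big_nat1.
  have -> : bstar_at i i = u i by rewrite /bstar_at ltnn eqxx.
  rewrite gs_coef_diag.
  have -> : \sum_(i.+1 <= j < k) gs_coef A j * bstar_at j i =
            C * w i * \sum_(i.+1 <= j < k) (C * A / Dsum j.+1 - C * A / Dsum j).
    rewrite mulr_sumr; apply: eq_big_nat => j /andP[lt_ij _].
    by rewrite /bstar_at lt_ij -[in RHS](opprK (_ - _)) -gs_coef_last; ring.
  rewrite telescope_sumr //.
  by field; rewrite !gt_eqF ?Dsum_gt0.
have bstar_i j : (j < k)%N ->
    bstar_at j i = if (i < d)%N then 0 else C * L j / Dsum j.
  by move=> lt_jk; rewrite bstar_at_gt // (leq_trans lt_jk le_ki).
case: ifP => lt_id.
  by rewrite big_nat big1 ?subr0 // => j /andP[_ lt_jk]; rewrite bstar_i ?lt_id ?mulr0.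
under eq_big_nat => j /andP[_ lt_jk] do rewrite bstar_i // lt_id gs_coef_last.
have -> : (i : nat) = d by apply/eqP; rewrite eqn_leq -ltnS ltn_ord leqNgt lt_id.
rewrite sumrN telescope_sumr // Dsum0 fd.
by rewrite divr1 opprK addrC subrK.
Qed.

Lemma gram_schmidt_bvec m : (m <= d)%N ->
  gram_schmidt [seq \row_(i < d.+1) bvec_at j i | j <- iota 0 m] =
  [seq \row_(i < d.+1) bstar_at j i | j <- iota 0 m].
Proof.
elim: m => [//|m IH] lt_md.
have -> : iota 0 m.+1 = rcons (iota 0 m) m by rewrite -cats1 -addn1 iotaD.
rewrite !map_rcons /gram_schmidt foldl_rcons -/(gram_schmidt _) IH ?(ltnW lt_md) //.
rewrite /gs_step; congr rcons; apply/rowP => i.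
rewrite (gs_residual _ (L m) _ _ (ltnW lt_md)); first last.
- by rewrite /bvec_at eqxx gtn_eqF.
- by move=> j lt_jm; rewrite /bvec_at ltn_eqF ?ltn_eqF // (ltn_trans lt_jm).
rewrite mxE /bstar_at /bvec_at; case: ltnP => // _.
case: eqP => [->|_]; first by rewrite lt_md.
by case: ifP => // lt_id; rewrite ltn_eqF.
Qed.

Lemma gram_schmidt_arrow A :
  gram_schmidt (rcons [seq \row_(i < d.+1) bvec_at j i | j <- iota 0 d]
                      (\row_(i < d.+1) if (i : nat) == d then C * A else 0)) =
  rcons [seq \row_(i < d.+1) bstar_at j i | j <- iota 0 d]
        (\row_(i < d.+1) tstar_at A i).
Proof.
rewrite /gram_schmidt foldl_rcons -/(gram_schmidt _) gram_schmidt_bvec //.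
rewrite /gs_step; congr rcons; apply/rowP => i.
rewrite (gs_residual (fun l => if l == d then C * A else 0) A _ _ (leqnn d)) ?eqxx //; last first.
  by move=> j lt_jd; rewrite ltn_eqF.
by rewrite mxE /tstar_at; case: ifP => // ->.
Qed.

Lemma dotv_tstar A :
  dotv (\row_(i < d.+1) tstar_at A i) (\row_(i < d.+1) tstar_at A i) =
  (C * A) ^+ 2 / Dsum d.
Proof.
rewrite dotv_row /tstar_at ltnn.
have -> : \sum_(0 <= i < d) tstar_at A i * tstar_at A i =
          (C ^+ 2 * A / Dsum d) ^+ 2 * \sum_(0 <= i < d) w i ^+ 2.
  by rewrite mulr_sumr; apply: eq_big_nat => i /andP[_ lt_id]; rewrite /tstar_at lt_id; ring.
have := Dsum_gt0 d; rewrite /Dsum => D_gt0.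
by field; rewrite gt_eqF.
Qed.

End GramSchmidtArrow.

Section PrimeLattice.
Variables (R : realType) (d N : nat) (C p : R).
Local Notation u := (fun j => powR (lnp R j) p^-1).
Local Notation w := (fun j => powR (lnp R j) (1 - p^-1)).

Lemma powR_lnp_neq0 (a : R) j : powR (lnp R j) a != 0.
Proof. by rewrite gt_eqF // powR_gt0 // lnp_gt0. Qed.

Lemma powR_lnp_split j : powR (lnp R j) p^-1 * powR (lnp R j) (1 - p^-1) = lnp R j.
Proof.
rewrite -powRD; last by rewrite (gt_eqF (lnp_gt0 R j)) implybT.
by rewrite addrC subrK powRr1 // ltW // lnp_gt0.
Qed.

Lemma powR_lnp_sqr (a : R) j : powR (lnp R j) a ^+ 2 = powR (lnp R j) (a *+ 2).
Proof. by rewrite -powR_mulrn ?powR_ge0 // -powRrM mulr_natr. Qed.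

Lemma Dj_Dsum k : Dj C p k = Dsum _ C w k.
Proof.
rewrite /Dj /Dsum big_mkord; congr (_ + _ * _); apply: eq_bigr => i _.
by rewrite powR_lnp_sqr mulrnBl mulr_natl.
Qed.

Lemma Dj_gt0 k : 0 < Dj C p k.
Proof. by rewrite Dj_Dsum Dsum_gt0. Qed.

Lemma family_arrow :
  Defs.family d N C p =
  rcons [seq \row_(i < d.+1) bvec_at _ d C u (lnp R) j i | j <- iota 0 d]
        (\row_(i < d.+1) if (i : nat) == d then C * ln N%:R else 0).
Proof. by rewrite /Defs.family -cats1 -val_enum_ord -map_comp. Qed.

Lemma gs_familyE :
  gs_family d N C p =
  rcons [seq \row_(i < d.+1) bstar_at _ d C u w (lnp R) j i | j <- iota 0 d]
        (\row_(i < d.+1) tstar_at _ d C w (ln N%:R) i).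
Proof.
rewrite /gs_family family_arrow (@gram_schmidt_arrow _ _ _ _ w) // => j.
  exact: powR_lnp_neq0.
exact: powR_lnp_split.
Qed.

Lemma bstarE (k : 'I_d) : bstar d N C p k = \row_(i < d.+1) bstar_at _ d C u w (lnp R) k i.
Proof.
rewrite /bstar -/(gs_family d N C p) gs_familyE nth_rcons size_map size_iota ltn_ord.
by rewrite (nth_map 0) ?size_iota // nth_iota.
Qed.

Lemma tstarE : tstar d N C p = \row_(i < d.+1) tstar_at _ d C w (ln N%:R) i.
Proof.
by rewrite /tstar -/(gs_family d N C p) gs_familyE nth_rcons size_map size_iota ltnn eqxx.
Qed.

End PrimeLattice.

Theorem theorem4 (R : realType) (d N : nat) (C p : R) :
  (1 <= d)%N -> (1 <= N)%N -> 0 < C -> 1 <= p ->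
  (forall (k : 'I_d) (i : 'I_(d.+1)),
     bstar d N C p k 0 i =
       if (i < k)%N then
         - (C ^+ 2 * lnp R k * powR (lnp R i) (1 - p^-1)) / Dj C p k
       else if (i : nat) == (k : nat) then powR (lnp R k) p^-1
       else if (i < d)%N then 0
       else C * lnp R k / Dj C p k) /\
  (forall i : 'I_(d.+1),
     tstar d N C p 0 i =
       if (i < d)%N then
         - (C ^+ 2 * ln (N%:R : R) * powR (lnp R i) (1 - p^-1)) / Dj C p d
       else C * ln (N%:R : R) / Dj C p d) /\
  (forall k : 'I_d,
     dotv (bstar d N C p k) (bstar d N C p k) =
       powR (lnp R k) (2 / p) * (Dj C p k.+1 / Dj C p k)) /\
  dotv (tstar d N C p) (tstar d N C p) = (C * ln (N%:R : R)) ^+ 2 / Dj C p d /\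
  (forall i : 'I_(d.+1),
     (tvec d N C - tstar d N C p) 0 i =
       if (i < d)%N then
         C ^+ 2 * ln (N%:R : R) * powR (lnp R i) (1 - p^-1) / Dj C p d
       else C * ln (N%:R : R) * (Dj C p d - 1) / Dj C p d).
Proof.
(* The identities hold for all [d], [N], [C] and [p]. *)
move=> _ _ _ _.
split; first by move=> k i; rewrite bstarE mxE /bstar_at !Dj_Dsum.
split; first by move=> i; rewrite tstarE mxE /tstar_at !Dj_Dsum.
split.
  move=> k; rewrite bstarE dotv_bstar_self //; last exact: powR_lnp_split.
  by rewrite powR_lnp_sqr -(mulr_natl p^-1 2) !Dj_Dsum.
split; first by rewrite tstarE dotv_tstar Dj_Dsum.
move=> i; rewrite tstarE !mxE /tstar_at -!Dj_Dsum.
case: ltnP => [lt_id|le_di]; first by rewrite ltn_eqF // sub0r mulNr opprK.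
have -> : (i : nat) = d by apply/eqP; rewrite eqn_leq le_di -ltnS ltn_ord.
by rewrite eqxx; field; rewrite lt0r_neq0 ?Dj_gt0.
Qed.
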